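(* Let $G$ be a graph with no induced $P_7$, $C_4$, $C_6$ or $C_7$, and let $H=(B_1,\dots,B_5)$ be a nice blowup of $C_5$ in $G$. For every $v\in V(G)\setminus V(H)$, the set $\operatorname{supp}(v)$ consists of consecutive integers modulo $5$ and has size in $\{0,1,2,3,5\}$.
   Context: Indices modulo $5$. A nice blowup of $C_5$ is a tuple $(B_1,\dots,B_5)$ of pairwise disjoint cliques such that every vertex of $B_i$ has a neighbor in $B_{i-1}$ and in $B_{i+1}$, $B_i$ is anticomplete to $B_{i+2}$, and there are no $a\in B_i$, distinct $b,c\in B_{i+1}$, $d\in B_{i+2}$ with $G[\{a,b,c,d\}]\cong P_4$. $V(H)=B_1\cup\dots\cup B_5$. For $v\notin V(H)$, $\operatorname{supp}(v)=\{i\in\{1,\dots,5\}: v \text{ has a neighbor in } B_i\}$. *)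

From mathcomp Require Import all_boot.
Set Implicit Arguments. Unset Strict Implicit. Unset Printing Implicit Defensive.

Definition simple_graph (T : finType) (e : rel T) : Prop :=
  symmetric e /\ irreflexive e.

Definition path_adj (n : nat) (i j : 'I_n) : bool :=
  ((i : nat).+1 == j) || ((j : nat).+1 == i).

Definition cycle_adj (n : nat) (i j : 'I_n) : bool :=
  (((i : nat).+1 %% n) == j) || (((j : nat).+1 %% n) == i).

Definition has_induced (T : finType) (e : rel T) (n : nat) (F : rel 'I_n) : Prop :=
  exists f : 'I_n -> T, injective f /\ forall i j, e (f i) (f j) = F i j.

Definition induces_P4 (T : finType) (e : rel T) (S : {set T}) : Prop :=
  exists f : 'I_4 -> T, injective f /\ [set f i | i : 'I_4] = S /\
    forall i j, e (f i) (f j) = path_adj i j.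

Definition is_clique (T : finType) (e : rel T) (A : {set T}) : Prop :=
  forall x y, x \in A -> y \in A -> x != y -> e x y.

(* Indices modulo 5 are 'I_5; i+1 = ordS i, i-1 = ord_pred i. *)
Definition nice_blowup_C5 (T : finType) (e : rel T) (B : 'I_5 -> {set T}) : Prop :=
  (forall i j, i != j -> [disjoint B i & B j]) /\
  (forall i, is_clique e (B i)) /\
  (forall i x, x \in B i ->
      (exists2 y, y \in B (ord_pred i) & e x y) /\
      (exists2 y, y \in B (ordS i) & e x y)) /\
  (forall i x y, x \in B i -> y \in B (ordS (ordS i)) -> ~~ e x y) /\
  (forall i a b c d, a \in B i -> b \in B (ordS i) -> c \in B (ordS i) ->
      b != c -> d \in B (ordS (ordS i)) -> ~ induces_P4 e [set a; b; c; d]).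

Definition blowup_vertices (T : finType) (B : 'I_5 -> {set T}) : {set T} :=
  \bigcup_(i < 5) B i.

Definition supp (T : finType) (e : rel T) (B : 'I_5 -> {set T}) (v : T) : {set 'I_5} :=
  [set i : 'I_5 | [exists u in B i, e v u]].

(* S is a set of consecutive integers modulo 5: S = {a, a+1, ..., a+k-1} mod 5 *)
Definition consecutive_mod5 (S : {set 'I_5}) : Prop :=
  exists (a : 'I_5) (k : nat), k <= 5 /\
    S = [set i : 'I_5 | (((i : nat) + 5 - a) %% 5 < k)].

From mathcomp Require Import all_boot.

Set Implicit Arguments.
Unset Strict Implicit.
Unset Printing Implicit Defensive.

(* Suppose v sees B_i and B_(i+2) but not B_(i+1).  Pick neighbours a in B_i
   and c in B_(i+2) of v, a neighbour b of a and a neighbour b' of c in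
   B_(i+1).  An edge ab' or bc closes an induced C4 through v; otherwise
   b <> b' and a-b-b'-c is an induced P4, which niceness forbids.  Hence
   supp(v) contains i+1 whenever it contains i and i+2, and the subsets of
   Z/5 with this property are exactly the arcs of length 0, 1, 2, 3 or 5. *)

Lemma ordS5_neq (i : 'I_5) :
  [&& ordS i != i, ordS (ordS i) != i & ordS (ordS i) != ordS i].
Proof. by case: i => [[|[|[|[|[|]]]]]]. Qed.

Section InducedSubgraphs.
Variables (T : finType) (e : rel T).
Hypothesis simple_e : simple_graph e.

Lemma nth_ord_inj n (s : seq T) x : uniq s -> size s = n ->
  injective (fun i : 'I_n => nth x s i).
Proof.
move=> uniq_s size_s i j /eqP; rewrite nth_uniq ?size_s //.
by move/eqP/val_inj.
Qed.

Lemma imset_nth_ord (s : seq T) x0 :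
  [set nth x0 s i | i : 'I_(size s)] = [set x in s].
Proof.
apply/setP => x; rewrite inE; apply/imsetP/idP => [[i _ ->]|s_x]; first exact: mem_nth.
by exists (Ordinal (etrans (index_mem x s) s_x)); rewrite /= ?nth_index.
Qed.

Lemma induced_C4 (x0 x1 x2 x3 : T) : uniq [:: x0; x1; x2; x3] ->
  e x0 x1 -> e x1 x2 -> e x2 x3 -> e x3 x0 -> ~~ e x0 x2 -> ~~ e x1 x3 ->
  has_induced e (@cycle_adj 4).
Proof.
have [sym irr] := simple_e.
move=> uniq_x e01 e12 e23 e30 /negbTE n02 /negbTE n13.
exists (fun i : 'I_4 => nth x0 [:: x0; x1; x2; x3] i); split; first exact: nth_ord_inj.
by move=> [[|[|[|[|i]]]] Hi] [[|[|[|[|j]]]] Hj] //=;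
  rewrite ?irr // [LHS]sym ?(e01, e12, e23, e30, n02, n13).
Qed.

Lemma induced_P4 (x0 x1 x2 x3 : T) : uniq [:: x0; x1; x2; x3] ->
  e x0 x1 -> e x1 x2 -> e x2 x3 -> ~~ e x0 x2 -> ~~ e x1 x3 -> ~~ e x0 x3 ->
  induces_P4 e [set x0; x1; x2; x3].
Proof.
have [sym irr] := simple_e.
move=> uniq_x e01 e12 e23 /negbTE n02 /negbTE n13 /negbTE n03.
exists (fun i : 'I_4 => nth x0 [:: x0; x1; x2; x3] i); split; last split.
- exact: nth_ord_inj.
- rewrite (imset_nth_ord [:: x0; x1; x2; x3]); apply/setP => x; by rewrite !inE -!orbA.
- by move=> [[|[|[|[|i]]]] Hi] [[|[|[|[|j]]]] Hj] //=;
    rewrite ?irr // [LHS]sym ?(e01, e12, e23, n02, n13, n03).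
Qed.
End InducedSubgraphs.

Section NiceBlowup.
Variables (T : finType) (e : rel T) (B : 'I_5 -> {set T}).
Hypotheses (simple_e : simple_graph e) (nice_B : nice_blowup_C5 e B).

Lemma blowup_bags_neq i j x y : x \in B i -> y \in B j -> i != j -> x != y.
Proof.
have [disjB _] := nice_B.
by move=> Bx By neq_ij; apply: contraTneq Bx => ->; rewrite (disjointFl (disjB i j neq_ij)).
Qed.

Lemma outside_blowup_neq v : v \notin blowup_vertices B -> forall i x, x \in B i -> v != x.
Proof. by move=> v_out i x Bx; apply: contraNneq v_out => ->; apply/bigcupP; exists i. Qed.

Lemma bag_path_uniq i a b c :
  a \in B i -> b \in B (ordS i) -> c \in B (ordS (ordS i)) -> uniq [:: a; b; c].
Proof.
move=> Ba Bb Bc; have /and3P[neq10 neq20 neq21] := ordS5_neq i.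
rewrite /= !inE !negb_or (blowup_bags_neq Ba Bb) ?(blowup_bags_neq Ba Bc) //.
  by rewrite (blowup_bags_neq Bb Bc) // eq_sym.
all: by rewrite eq_sym.
Qed.

Lemma supp_gap_closed v i : ~ has_induced e (@cycle_adj 4) ->
  v \notin blowup_vertices B -> i \in supp e B v -> ordS (ordS i) \in supp e B v ->
  ordS i \in supp e B v.
Proof.
have [sym _] := simple_e; have [_ [cliqueB [nbrB [antiB noP4]]]] := nice_B.
move=> noC4 v_out; rewrite !inE => /exists_inP[a Ba va] /exists_inP[c Bc vc].
apply: contraT => /exists_inPn v_nbr1; exfalso.
have [_ [b Bb ab]] := nbrB _ _ Ba.
have [[b' Bb' cb'] _] := nbrB _ _ Bc; rewrite ordSK in Bb'.
have ac : ~~ e a c := antiB _ _ _ Ba Bc.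
have C4_through_v b1 : b1 \in B (ordS i) -> e a b1 -> e b1 c -> False.
  move=> Bb1 ab1 b1c; apply: noC4; apply: (@induced_C4 _ e simple_e v a b1 c) => //.
  - have v_neq := outside_blowup_neq v_out.
    rewrite (cons_uniq v) (bag_path_uniq Ba Bb1 Bc) !inE !negb_or.
    by rewrite !(v_neq _ _ Ba, v_neq _ _ Bb1, v_neq _ _ Bc).
  - by rewrite sym.
  - exact: v_nbr1.
have ab' : ~~ e a b' by apply/negP => ab'; apply: (C4_through_v b') => //; rewrite sym.
have bc : ~~ e b c by apply/negP; exact: C4_through_v Bb ab.
have bb' : b != b' by apply: contraNneq ab' => <-.
apply: (noP4 i a b b' c Ba Bb Bb' bb' Bc); apply: induced_P4 => //; last by rewrite sym.
- move: (bag_path_uniq Ba Bb Bc) (bag_path_uniq Ba Bb' Bc) => /=; rewrite !inE !negb_or bb'.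
  by case/and3P=> /andP[-> ->] -> _ /and3P[/andP[-> _] -> _].
- exact: cliqueB Bb Bb' bb'.
Qed.
End NiceBlowup.

(* A subset of 'I_5 is encoded by its list of membership bits, so that the
   claim becomes a closed computation over the 32 lists; [n.+1 %% 5] is
   [val (ordS n)]. *)
Lemma gap_closed_bits_arc (bs : seq bool) : size bs = 5 ->
  all (fun n => nth false bs n ==> nth false bs ((n.+1 %% 5).+1 %% 5) ==>
                nth false bs (n.+1 %% 5)) (iota 0 5) ->
  has (fun a => has (fun k => all (fun n => nth false bs n == ((n + 5 - a) %% 5 < k))
                                  (iota 0 5)) (iota 0 6)) (iota 0 5)
  && (count (nth false bs) (iota 0 5) \in [:: 0; 1; 2; 3; 5]).
Proof. by case: bs => [|[] [|[] [|[] [|[] [|[] [|]]]]]]. Qed.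

Lemma gap_closed_consecutive_mod5 (S : {set 'I_5}) :
  (forall i, i \in S -> ordS (ordS i) \in S -> ordS i \in S) ->
  consecutive_mod5 S /\ #|S| \in [:: 0; 1; 2; 3; 5].
Proof.
move=> gapS; pose bs := [seq i \in S | i <- enum 'I_5].
have bsE (i : 'I_5) : nth false bs i = (i \in S).
  by rewrite (nth_map i) ?size_enum_ord // nth_ord_enum.
have size_bs : size bs = 5 by rewrite size_map size_enum_ord.
have [|arc_bs card_bs] := andP (gap_closed_bits_arc size_bs _).
  apply/allP => n; rewrite mem_iota => /= lt_n5.
  by have := gapS (Ordinal lt_n5); rewrite -!bsE => gap_n; apply/implyP => /gap_n /implyP.
case/hasP: arc_bs => a; rewrite mem_iota => /andP[_ lt_a5].
case/hasP=> k; rewrite mem_iota => /andP[_ lt_k6] /allP arcS.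
have -> : #|S| = count (nth false bs) (iota 0 5).
  rewrite -sum1_card -sum1_count -/(index_iota 0 5) big_mkord.
  by apply: eq_bigl => i; rewrite bsE.
split=> //; exists (Ordinal lt_a5), k; split=> //.
by apply/setP => i; rewrite inE -bsE; apply/eqP/arcS; rewrite mem_iota /=.
Qed.

Theorem lemma4p2 (T : finType) (e : rel T) (B : 'I_5 -> {set T}) :
  simple_graph e ->
  ~ has_induced e (@path_adj 7) ->
  ~ has_induced e (@cycle_adj 4) ->
  ~ has_induced e (@cycle_adj 6) ->
  ~ has_induced e (@cycle_adj 7) ->
  nice_blowup_C5 e B ->
  forall v : T, v \notin blowup_vertices B ->
    consecutive_mod5 (supp e B v) /\ #|supp e B v| \in [:: 0; 1; 2; 3; 5].
Proof.
move=> simple_e _ noC4 _ _ nice_B v v_out.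
by apply: gap_closed_consecutive_mod5 => i; apply: supp_gap_closed.
Qed.
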